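(* Let $\Sigma$ be a finite alphabet. For every formula $\phi\in\mathbf{LTL}(\mathbf{F},\wedge)$ over $\Sigma$, either $\phi$ is equivalent to false (no nonempty word satisfies it), or there exist a finite set of non-repeating words $w_1,\dots,w_p\in\Sigma^*$ and $c\in\Sigma\cup\{\varepsilon\}$ such that for every nonempty word $z$: $z\models\phi$ if and only if every $w_q$ ($q\in[1,p]$) is a subword of $z$ and $z$ starts with $c$ (the latter condition being vacuous when $c=\varepsilon$).
   Context: Words are nonempty and indexed from position 1. $\mathbf{LTL}(\mathbf{F},\wedge)$: formulas built from atomic formulas $c\in\Sigma$, conjunction $\wedge$ and the eventually operator $\mathbf{F}$. Semantics on a word $w$ of length $\ell$ at position $i\in[1,\ell]$: $w,i\models c$ iff $w(i)=c$; $\wedge$ as usual; $w,i\models\mathbf{F}\phi$ iff $w,i'\models\phi$ for some $i'\in[i,\ell]$; $w\models\phi$ iff $w,1\models\phi$. A word $u=u(1)\cdots u(\ell')$ is a subword of $v=v(1)\cdots v(\ell)$ if there is a strictly increasing $f:[1,\ell']\to[1,\ell]$ with $v(f(i))=u(i)$ for all $i$ (scattered subsequence). A word is non-repeating if any two consecutive letters are different. *)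

From mathcomp Require Import all_boot.
Set Implicit Arguments. Unset Strict Implicit. Unset Printing Implicit Defensive.

Inductive ltlF (Sigma : Type) : Type :=
  | Atom : Sigma -> ltlF Sigma
  | And : ltlF Sigma -> ltlF Sigma -> ltlF Sigma
  | Fev : ltlF Sigma -> ltlF Sigma.

(* Semantics at position i. The paper uses positions 1..l; here positions
   are 0-based: paper position i corresponds to index i-1, i.e.
   w(i) = nth _ w (i-1). Only i < size w is meaningful. *)
Fixpoint sat (Sigma : eqType) (w : seq Sigma) (i : nat) (phi : ltlF Sigma) : Prop :=
  match phi with
  | Atom c => i < size w /\ nth c w i = c
  | And p q => sat w i p /\ sat w i q
  | Fev p => exists i', i <= i' /\ i' < size w /\ sat w i' p
  end.

Definition models (Sigma : eqType) (w : seq Sigma) (phi : ltlF Sigma) : Prop :=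
  sat w 0 phi.

Definition non_repeating (Sigma : eqType) (w : seq Sigma) : Prop :=
  forall i, i.+1 < size w -> forall x0 : Sigma, nth x0 w i <> nth x0 w i.+1.

(* z starts with c, c in Sigma ∪ {ε} (None = ε, vacuous). *)
Definition starts_with (Sigma : eqType) (c : option Sigma) (z : seq Sigma) : Prop :=
  match c with
  | None => True
  | Some a => ohead z = Some a
  end.

From mathcomp Require Import all_boot.
From mathcomp Require Import zify.

(* Call a pair (ws, c) of a list of non-repeating words and an optional
   letter a characterization of phi when, at every position i of every word
   w, "w, i |= phi" holds iff every word of ws is a subword of the suffix
   drop i w and that suffix starts with c.  We prove by structural induction
   that every formula is either unsatisfiable or characterized:
   - an atom a is characterized by ([::], Some a);
   - a conjunction concatenates the word lists and intersects the first-letter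
     constraints, which is either consistent or makes the formula unsatisfiable;
   - F p drops the first-letter constraint.  If p requires the letter a first,
     each word v of p is replaced by "a v" (without repeating a if v already
     starts with a) and [:: a] is added: a suffix beginning at the first a of
     the word contains all these words as soon as the whole word does.
   The theorem is the instance i = 0 of this invariant. *)

Section Characterization.
Variable Sigma : eqType.
Implicit Types (a : Sigma) (s u v w : seq Sigma) (ws : seq (seq Sigma)).

Definition char_lang ws (c : option Sigma) s :=
  (forall v, v \in ws -> subseq v s) /\ starts_with c s.

Definition unsat (phi : ltlF Sigma) := forall w i, ~ sat w i phi.

Definition characterized (phi : ltlF Sigma) ws (c : option Sigma) :=
  (forall v, v \in ws -> non_repeating v) /\
  forall w i, i < size w -> (sat w i phi <-> char_lang ws c (drop i w)).

Lemma sat_lt {w i phi} : sat w i phi -> i < size w.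
Proof.
elim: phi i => [a|p IHp q IHq|p IHp] i /=; first by case.
- by case=> /IHp.
- by case=> j [le_ij [lt_j _]]; apply: leq_ltn_trans lt_j.
Qed.

Lemma forall_in_cat (P : seq Sigma -> Prop) ws1 ws2 :
  (forall v, v \in ws1 ++ ws2 -> P v) <->
  (forall v, v \in ws1 -> P v) /\ (forall v, v \in ws2 -> P v).
Proof.
split=> [H | [H1 H2] v]; first by split=> v hv; apply: H; rewrite mem_cat hv ?orbT.
by rewrite mem_cat => /orP [] ?; [apply: H1 | apply: H2].
Qed.

Lemma starts_with_conj (c1 c2 : option Sigma) :
  (exists c, forall s, starts_with c1 s /\ starts_with c2 s <-> starts_with c s)
  \/ (forall s, ~ (starts_with c1 s /\ starts_with c2 s)).
Proof.
case: c1 c2 => [a|] [b|] /=; last 3 first.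
- by left; exists (Some a) => s; split=> [[]|].
- by left; exists (Some b) => s; split=> [[]|].
- by left; exists None.
case: (eqVneq a b) => [<-|neq_ab]; first by left; exists (Some a) => s; split=> [[]|].
by right=> s [-> [/eqP]]; rewrite (negPf neq_ab).
Qed.

Lemma subseq_drop_index x u s :
  subseq (x :: u) s -> subseq (x :: u) (drop (index x s) s).
Proof.
elim: s => [|y s IHs] //=; case: (eqVneq y x) => [->|neq_yx] /=; first by rewrite eqxx.
exact: IHs.
Qed.

Definition cons_head a w := if ohead w == Some a then w else a :: w.

Lemma ohead_cons_head a w : ohead (cons_head a w) = Some a.
Proof. by rewrite /cons_head; case: eqP. Qed.

Lemma subseq_cons_head a w : subseq w (cons_head a w).
Proof. by rewrite /cons_head; case: eqP => _; [apply: subseq_refl | apply: subseq_cons]. Qed.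

Lemma cons_head_subseq a w t : subseq (cons_head a w) (a :: t) = subseq w (a :: t).
Proof.
rewrite /cons_head; case: w => [|b u] /=; first by rewrite eqxx sub0seq.
case: eqP => [[->] | neq_ba] /=; first by rewrite eqxx.
by rewrite eqxx; case: eqP => // eq_ba; case: neq_ba; rewrite eq_ba.
Qed.

Lemma non_repeating_cons_head a w : non_repeating w -> non_repeating (cons_head a w).
Proof.
rewrite /cons_head; case: w => [|b u] /=; first by move=> _ [|i].
case: eqP => [//|neq_ba] nr_bu [|i] /= lt_i x0; first by move=> eq_ab; apply: neq_ba; congr Some.
exact: nr_bu.
Qed.

Lemma exists_suffix_head a ws s :
  (exists k, k < size s /\ char_lang ws (Some a) (drop k s)) <->
  char_lang ([:: a] :: map (cons_head a) ws) None s.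
Proof.
split=> [[k [lt_k [sub_k /= head_k]]] | [sub_s _]].
- have drop_k : drop k s = a :: drop k.+1 s.
    by move: head_k; rewrite (drop_nth a lt_k) => -[->].
  split=> // v; rewrite inE => /orP [/eqP -> | /mapP [u u_ws ->]];
    apply: (subseq_trans _ (drop_subseq s k)); rewrite drop_k.
  + by rewrite sub1seq mem_head.
  + by rewrite cons_head_subseq -drop_k; apply: sub_k.
- have a_s : a \in s by rewrite -sub1seq; apply: sub_s; rewrite mem_head.
  have lt_idx : index a s < size s by rewrite index_mem.
  have drop_idx : drop (index a s) s = a :: drop (index a s).+1 s.
    by rewrite (drop_nth a lt_idx) nth_index.
  exists (index a s); split=> //.
  split=> [u u_ws|]; last by rewrite drop_idx.
  apply: subseq_trans (subseq_cons_head a u) _.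
  have : subseq (cons_head a u) s by apply: sub_s; rewrite inE map_f ?orbT.
  move: (ohead_cons_head a u); case: (cons_head a u) => [|x t] //= [->].
  exact: subseq_drop_index.
Qed.

Lemma exists_suffix_free ws s : 0 < size s ->
  (exists k, k < size s /\ char_lang ws None (drop k s)) <-> char_lang ws None s.
Proof.
move=> s_gt0; split=> [[k [_ [sub_k _]]] | s_char]; last by exists 0; rewrite drop0.
by split=> // v /sub_k /subseq_trans; apply; apply: drop_subseq.
Qed.

Lemma sat_Fev_drop w i p :
  sat w i (Fev p) <-> exists k, k < size (drop i w) /\ sat w (k + i) p.
Proof.
rewrite size_drop; split=> [[j [le_ij [lt_j sat_j]]] | [k [lt_k sat_k]]].
- by exists (j - i); rewrite subnK //; split=> //; lia.
- by exists (k + i); split; [apply: leq_addl | split=> //; lia].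
Qed.

Lemma characterized_atom a : characterized (Atom a) [::] (Some a).
Proof.
split=> // w i lt_i /=; rewrite /char_lang (drop_nth a lt_i) /=.
by split=> [[_ ->] | [_ [->]]].
Qed.

Lemma characterized_and {p q ws1 ws2 c1 c2} :
  characterized p ws1 c1 -> characterized q ws2 c2 ->
  unsat (And p q) \/ exists c, characterized (And p q) (ws1 ++ ws2) c.
Proof.
move=> [nr1 char1] [nr2 char2].
have sat_and w i : i < size w -> sat w i (And p q) <->
    char_lang (ws1 ++ ws2) None (drop i w) /\
    starts_with c1 (drop i w) /\ starts_with c2 (drop i w).
  move=> lt_i /=; rewrite char1 // char2 // /char_lang forall_in_cat.
  by split=> [[[? ?] [? ?]] | [[[? ?] _] [? ?]]].
case: (starts_with_conj c1 c2) => [[c conj_c] | incompatible].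
- right; exists c; split; first by apply/forall_in_cat.
  move=> w i lt_i; rewrite sat_and // conj_c.
  by split=> [[[? _] ?] | [? ?]].
- left=> w i sat_i; have [_ starts_both] := (sat_and w i (sat_lt sat_i)).1 sat_i.
  exact: incompatible starts_both.
Qed.

Lemma characterized_Fev {p ws c} :
  characterized p ws c -> exists ws', characterized (Fev p) ws' None.
Proof.
move=> [nr char_p].
have sat_F w i : i < size w -> sat w i (Fev p) <->
    exists k, k < size (drop i w) /\ char_lang ws c (drop k (drop i w)).
  move=> _; rewrite sat_Fev_drop.
  have char_k k : k < size (drop i w) ->
      sat w (k + i) p <-> char_lang ws c (drop k (drop i w)).
    by rewrite size_drop drop_drop => lt_k; apply: char_p; lia.
  by split=> -[k [lt_k /(char_k k lt_k) holds_k]]; exists k.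
case: c char_p sat_F => [a|] _ sat_F.
- exists ([:: a] :: map (cons_head a) ws); split.
  + move=> v; rewrite inE => /orP [/eqP -> | /mapP [u u_ws ->]]; first by case.
    exact/non_repeating_cons_head/nr.
  + by move=> w i lt_i; rewrite sat_F // exists_suffix_head.
- exists ws; split=> // w i lt_i; rewrite sat_F // exists_suffix_free //.
  by rewrite size_drop subn_gt0.
Qed.

Lemma unsat_or_characterized (phi : ltlF Sigma) :
  unsat phi \/ exists ws c, characterized phi ws c.
Proof.
elim: phi => [a|p IHp q IHq|p IHp].
- by right; exists [::], (Some a); apply: characterized_atom.
- case: IHp => [unsat_p|[ws1 [c1 char_p]]]; first by left=> w i [/unsat_p].
  case: IHq => [unsat_q|[ws2 [c2 char_q]]]; first by left=> w i [_ /unsat_q].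
  case: (characterized_and char_p char_q) => [|[c char_pq]]; first by left.
  by right; exists (ws1 ++ ws2), c.
- case: IHp => [unsat_p|[ws [c /characterized_Fev [ws' char_F]]]].
    by left=> w i [j [_ [_ /unsat_p]]].
  by right; exists ws', None.
Qed.

End Characterization.

Theorem lemma2 (Sigma : finType) (phi : ltlF Sigma) :
  (forall z : seq Sigma, z <> [::] -> ~ models z phi) \/
  exists (ws : seq (seq Sigma)) (c : option Sigma),
    (forall w, w \in ws -> non_repeating w) /\
    forall z : seq Sigma, z <> [::] ->
      (models z phi <-> ((forall w, w \in ws -> subseq w z) /\ starts_with c z)).
Proof.
case: (unsat_or_characterized _ phi) => [unsat_phi | [ws [c [nr char_phi]]]].
  by left=> z _; apply: unsat_phi.
right; exists ws, c; split=> // z z_nil.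
have z_gt0 : 0 < size z by case: z z_nil.
by rewrite /models char_phi // drop0.
Qed.
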